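(* For every $r\in\mathbb{F}_2((x^{-1}))$ we have $T([r])=[S(r)]$, and $T^n([r])=[S^n(r)]$ for all $n\in\mathbb{N}$.
   Context: $\mathbb{F}_2((x^{-1}))$ is the field of formal series $\sum_{z\in\mathbb{Z}}a_zx^z$, $a_z\in\mathbb{F}_2$, with $a_z\ne0$ for only finitely many positive $z$. The polynomial part is $[\sum a_zx^z]=\sum_{z\ge0}a_zx^z$. $S(r)=\frac{r}{x+1}$ if $[r](1)=0$ and $S(r)=\frac{xr}{x+1}$ if $[r](1)=1$. $T:\mathbb{F}_2[x]\to\mathbb{F}_2[x]$ is given by $T(f)=\frac{f}{x+1}$ if $f(1)=0$ and $T(f)=\frac{xf+1}{x+1}$ if $f(1)=1$. *)

From HB Require Import structures.
From Stdlib Require Import ClassicalEpsilon.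
From mathcomp Require Import all_boot all_order all_algebra.
Set Implicit Arguments. Unset Strict Implicit. Unset Printing Implicit Defensive.
Import Order.TTheory GRing.Theory Num.Theory.
Local Open Scope ring_scope.

(* F2 = 'F_2.  An element of F_2((x^{-1})) is a formal series
   sum_{z in Z} coef z * x^z with coef z = 0 for all z > bnd. *)
Record laurent := Laurent {
  coef : int -> 'F_2;
  bnd : nat;
  coefP : forall z : int, (bnd%:Z < z)%R -> coef z = 0 }.

Definition polypart (r : laurent) : {poly 'F_2} :=
  \poly_(i < (bnd r).+1) coef r (Posz i).

(* S(r) = r/(x+1) if [r](1) = 0, and x r/(x+1) if [r](1) = 1.
   r' / (x+1) is the unique s with (x+1) s = r', i.e. coefficientwise
   s_{z-1} + s_z = r'_z. *)
Definition S (r : laurent) : laurent :=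
  let t : int -> 'F_2 :=
    if (polypart r).[1] == 0 then coef r else (fun z => coef r (z - 1)) in
  epsilon (inhabits r)
    (fun s : laurent => forall z : int, coef s (z - 1) + coef s z = t z).

Definition T (f : {poly 'F_2}) : {poly 'F_2} :=
  if f.[1] == 0 then f %/ ('X + 1) else ('X * f + 1) %/ ('X + 1).

From Stdlib Require Import ClassicalEpsilon.
From mathcomp Require Import all_boot all_order all_algebra.
From mathcomp Require Import zify.
Import Order.TTheory GRing.Theory Num.Theory.
Local Open Scope ring_scope.

(* If (x + 1) s = t coefficientwise, then comparing polynomial parts gives
   (x + 1) [s] = [t] + s_{-1}, and evaluating at 1 forces s_{-1} = [t](1);
   hence [s] is the exact quotient of [t] + [t](1) by x + 1.  For S this is
   used with t = r when [r](1) = 0, and with t = x r when [r](1) = 1, where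
   [x r] = x [r] + r_{-1} and so [t] + [t](1) = x [r] + 1.  The statement
   about iterates follows by induction. *)

Lemma pchar_F2 : (2 \in [pchar 'F_2])%N.
Proof. exact: pchar_Fp. Qed.

Lemma addrr_F2 (x : 'F_2) : x + x = 0.
Proof. exact: addrr_pchar2 pchar_F2 x. Qed.

Lemma F2_neq0 (x : 'F_2) : x != 0 -> x = 1.
Proof. by case: x => [[|[|n]] lt_n2] // _; apply: val_inj. Qed.

(* s_z = sum_{z < w <= B} t_w, which telescopes to s_{z-1} + s_z = t_z in
   characteristic 2 once t vanishes above B. *)
Definition divXD1 (t : int -> 'F_2) (B : nat) (z : int) : 'F_2 :=
  if B%:Z - z is Posz n then \sum_(k < n) t (B%:Z - k%:Z) else 0.

Lemma divXD1_bnd (t : int -> 'F_2) (B : nat) (z : int) :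
  B%:Z <= z -> divXD1 t B z = 0.
Proof.
move=> le_Bz; rewrite /divXD1.
by case def_n: (B%:Z - z) => [[|n]|] //; [exact: big_ord0 | lia].
Qed.

Section DivisionByXD1.

Variables (t : int -> 'F_2) (B : nat).
Hypothesis t_bnd : forall z : int, B%:Z < z -> t z = 0.

Lemma divXD1P (z : int) : divXD1 t B (z - 1) + divXD1 t B z = t z.
Proof.
have [lt_Bz | le_zB] := ltrP B%:Z z.
  by rewrite t_bnd // !divXD1_bnd ?addr0 //; lia.
have [n def_n] : exists n : nat, B%:Z - z = n by exists `|B%:Z - z|%N; lia.
rewrite /divXD1 def_n (_ : B%:Z - (z - 1) = n.+1); last by lia.
by rewrite big_ord_recr /= addrAC addrr_F2 add0r -def_n subKr.
Qed.

Lemma exists_divXD1 :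
  exists s : laurent, forall z : int, coef s (z - 1) + coef s z = t z.
Proof.
have s_bnd (z : int) : B%:Z < z -> divXD1 t B z = 0 by move/ltW; apply: divXD1_bnd.
by exists (Laurent s_bnd) => z; apply: divXD1P.
Qed.

End DivisionByXD1.

Lemma coef_S (r : laurent) (z : int) :
  coef (S r) (z - 1) + coef (S r) z =
  if (polypart r).[1] == 0 then coef r z else coef r (z - 1).
Proof.
rewrite /S; set t := (if _ then _ else _).
have t_bnd (w : int) : (bnd r).+1%:Z < w -> t w = 0.
  by move=> lt_w; rewrite /t; case: ifP => _; rewrite coefP //; lia.
have /(_ z) -> := epsilon_spec (inhabits r) _ (@exists_divXD1 _ _ t_bnd).
by rewrite /t; case: ifP.
Qed.

Lemma coef_polypart (r : laurent) (i : nat) : (polypart r)`_i = coef r i.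
Proof.
rewrite coef_poly; case: ltnP => // le_bnd_i.
by rewrite coefP //; lia.
Qed.

Lemma coef_polypart_mulX (r : laurent) (i : nat) :
  ('X * polypart r + (coef r (-1))%:P)`_i = coef r (i%:Z - 1).
Proof.
rewrite coefD coefXM coefC; case: i => [|i] /=; first by rewrite add0r.
by rewrite addr0 coef_polypart; congr coef; lia.
Qed.

Lemma mulXD1_polypart (s : laurent) (p : {poly 'F_2}) :
  (forall i : nat, coef s (i%:Z - 1) + coef s i = p`_i) ->
  ('X + 1) * polypart s = p + (coef s (-1))%:P.
Proof.
move=> sP; apply/polyP => i.
rewrite mulrDl mul1r !coefD coefXM coefC -sP !coef_polypart.
case: i => [|i] /=; first by rewrite add0r addrAC addrr_F2 add0r.
by rewrite addr0; congr (coef s _ + _); lia.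
Qed.

Lemma mulXD1_divp (P q : {poly 'F_2}) (c : 'F_2) :
  ('X + 1) * P = q + c%:P -> P = (q + q.[1]%:P) %/ ('X + 1).
Proof.
move=> qP; have c_eq : c = q.[1].
  move/(congr1 (horner^~ 1)): qP; rewrite hornerM !hornerE addrr_F2 mul0r.
  by move/esym/eqP; rewrite addr_eq0 oppr_pchar2 ?pchar_F2 // => /eqP.
rewrite -c_eq -qP mulKp //; apply: monic_neq0.
by rewrite -polyC1 monicXaddC.
Qed.

Lemma T_polypart (r : laurent) : T (polypart r) = polypart (S r).
Proof.
have SP := coef_S r; rewrite /T; case: ifP => p1 in SP *.
  rewrite [RHS](@mulXD1_divp _ (polypart r) (coef (S r) (-1))) ?(eqP p1) ?addr0 //.
  by apply: mulXD1_polypart => i; rewrite SP coef_polypart.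
rewrite [RHS](@mulXD1_divp _ ('X * polypart r + (coef r (-1))%:P) (coef (S r) (-1))).
  rewrite !hornerE (F2_neq0 _ (negbT p1)) -addrA; congr ((_ + _) %/ _).
  by rewrite -polyCD addrCA addrr_F2 addr0.
by apply: mulXD1_polypart => i; rewrite SP coef_polypart_mulX.
Qed.

Theorem lemma2p2 (r : laurent) :
  T (polypart r) = polypart (S r) /\
  (forall n : nat, iter n T (polypart r) = polypart (iter n S r)).
Proof.
split; first exact: T_polypart.
by elim=> //= n IH; rewrite IH T_polypart.
Qed.
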